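(* Let $\theta\in[0,\pi[$, let $A$ be a non-empty line segment of length $l(A)$, let $(h(n))_n$ be a sequence of positive reals, and let $f$ be a lower semi-continuous function from $[\theta-\pi/2,\theta+\pi/2]$ to $\mathbb{R}^+\cup\{+\infty\}$. Let $\mathcal{D}_n=[\theta-\arctan(2h(n)/(nl(A))),\theta+\arctan(2h(n)/(nl(A)))]$ and $\underline{\mathcal{D}}=\bigcup_{N\ge1}\bigcap_{n\ge N}\mathcal{D}_n$. Then $$\limsup_{n\to\infty}\inf_{\widetilde\theta\in\mathcal{D}_n}f(\widetilde\theta)\geq\inf_{\widetilde\theta\in \mathrm{cl}(\underline{\mathcal{D}})}f(\widetilde\theta),$$ where $\mathrm{cl}(\underline{\mathcal{D}})$ is the closure of $\underline{\mathcal{D}}$. *)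

From HB Require Import structures.
From mathcomp Require Import all_boot all_order all_algebra.
From mathcomp Require Import all_classical all_reals all_analysis.
Set Implicit Arguments. Unset Strict Implicit. Unset Printing Implicit Defensive.
Import Order.TTheory GRing.Theory Num.Theory.
Import numFieldNormedType.Exports.
Local Open Scope classical_set_scope.
Local Open Scope ring_scope.

(* Lower semicontinuity of f : R -> \bar R on a domain D, w.r.t. the subspace
   topology of D (f is only meaningful on D). *)
Definition lsc_on {R : realType} (D : set R) (f : R -> \bar R) :=
  forall x, D x -> forall a : R, (a%:E < f x)%E ->
    exists2 V, nbhs x V & forall y, V y -> D y -> (a%:E < f y)%E.

Definition Dn {R : realType} (theta l : R) (h : nat -> R) (n : nat) : set R :=
  `[theta - atan (2 * h n / (n%:R * l)), theta + atan (2 * h n / (n%:R * l))]%classic.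

Definition Dunder {R : realType} (theta l : R) (h : nat -> R) : set R :=
  \bigcup_(N in [set N : nat | (1 <= N)%N]) \bigcap_(n in [set n : nat | (N <= n)%N]) Dn theta l h n.

From HB Require Import structures.
From mathcomp Require Import all_boot all_order all_algebra.
From mathcomp Require Import all_classical all_reals all_analysis.
From mathcomp Require Import lra.
Import Order.TTheory GRing.Theory Num.Theory.
Import numFieldNormedType.Exports.
Local Open Scope classical_set_scope.
Local Open Scope ring_scope.

(* Fix a real [b] below the infimum of [f] on [cl Dunder] and an index [N], and let
   [m] be the infimum of the radii of the [Dn], [n >= N].  The closed ball of
   radius [m] around [theta] lies in [Dunder], so [f > b] on it; lower
   semicontinuity at its two endpoints keeps [f > b] on a slightly larger ball,
   which contains some [Dn] with [n >= N].  So [b <= inf_(Dn) f] for infinitely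
   many [n], and the limsup is at least [b]. *)

Section ereal_lsc.
Context {R : realType}.
Implicit Types (x y z r b : R) (f : R -> \bar R).

Lemma itvcc_centerE x r y : `[x - r, x + r]%classic y = (`|y - x| <= r).
Proof. by rewrite /= in_itv /= ler_distl. Qed.

Lemma lee_EFin_lt (u v : \bar R) :
  (forall r, (r%:E < u)%E -> (r%:E <= v)%E) -> (u <= v)%E.
Proof.
case: u => [u| |] uv; last by rewrite leNye.
- case: v uv => [v| |] uv; rewrite ?leey //.
    by rewrite lee_fin leNgt; apply/negP => vu; move: (uv ((u + v) / 2));
      rewrite !lte_fin !lee_fin => /(_ ltac:(lra)); lra.
  by move: (uv (u - 1)); rewrite lte_fin leNgt ltNye => /(_ ltac:(lra)).
- case: v uv => [v| |] uv //; last by move: (uv 0); rewrite ltry leNgt ltNye => /(_ isT).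
  by move: (uv (v + 1)); rewrite ltry lee_fin => /(_ isT) ?; exfalso; lra.
Qed.

Lemma limn_esup_ge (u : (\bar R)^nat) (c : \bar R) :
  (forall b, (b%:E < c)%E -> forall N, exists2 n, (N <= n)%N & (b%:E <= u n)%E) ->
  (c <= limn_esup u)%E.
Proof.
move=> freq; apply: lee_EFin_lt => b bc.
rewrite limn_esup_lim (cvg_lim _ (@cvg_esups_inf R u)) //.
apply/ereal_infP => _ [N _ <-]; have [n Nn bn] := freq b bc N.
by apply: le_trans bn _; apply: ereal_sup_ubound; exists n.
Qed.

Lemma lsc_on_ball (D : set R) f z b : lsc_on D f -> D z -> (b%:E < f z)%E ->
  exists2 d, 0 < d & forall y, `|y - z| < d -> D y -> (b%:E < f y)%E.
Proof.
move=> flsc Dz bfz; have [V /nbhs_ballP[d d0 zdV] bfV] := flsc z Dz b bfz.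
by exists d => // y yz Dy; apply: bfV Dy; apply: zdV; rewrite /ball /= distrC.
Qed.

(* Lower semicontinuity on the compact interval only has to be used at the two
   endpoints [x - r] and [x + r] of the ball where [f > b] is known. *)
Lemma lsc_on_gt_widen x rho r b f :
  lsc_on `[x - rho, x + rho] f ->
  (forall y, `[x - rho, x + rho]%classic y -> `|y - x| <= r -> (b%:E < f y)%E) ->
  exists2 s, r < s &
    forall y, `[x - rho, x + rho]%classic y -> `|y - x| <= s -> (b%:E < f y)%E.
Proof.
move=> flsc bf.
have [r0|r_ge0] := ltP r 0.
  by exists (r / 2) => [|y _ yx]; [lra | exfalso; have := normr_ge0 (y - x); lra].
have [rho_r|r_rho] := leP rho r.
  exists (r + 1) => [|y Dy _]; first lra.
  by move: (Dy); rewrite itvcc_centerE => ?; apply: bf Dy _; lra.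
have [dp dp0 bfp] : exists2 d, 0 < d &
    forall y, `|y - (x + r)| < d -> `[x - rho, x + rho]%classic y -> (b%:E < f y)%E.
  by apply: lsc_on_ball flsc _ _; rewrite ?itvcc_centerE; [|apply: bf];
     rewrite ?itvcc_centerE addrAC subrr add0r ger0_norm //; lra.
have [dm dm0 bfm] : exists2 d, 0 < d &
    forall y, `|y - (x - r)| < d -> `[x - rho, x + rho]%classic y -> (b%:E < f y)%E.
  by apply: lsc_on_ball flsc _ _; rewrite ?itvcc_centerE; [|apply: bf];
     rewrite ?itvcc_centerE addrAC subrr add0r normrN ger0_norm //; lra.
set d := Num.min dp dm.
have [ddp ddm d0] : [/\ d <= dp, d <= dm & 0 < d].
  by rewrite !ge_min !lexx orbT lt_min dp0 dm0.
exists (r + d / 2) => [|y Dy yx]; first lra.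
have [|yxr] := leP `|y - x| r; first exact: bf.
have [yx0|yx0] := leP 0 (y - x).
  rewrite ger0_norm // in yx yxr; apply: bfp Dy.
  by rewrite ltr_norml; apply/andP; split; lra.
rewrite ltr0_norm // in yx yxr; apply: bfm Dy.
by rewrite ltr_norml; apply/andP; split; lra.
Qed.

End ereal_lsc.

Definition Dn_radius {R : realType} (l : R) (h : nat -> R) (n : nat) : R :=
  atan (2 * h n / (n%:R * l)).

Lemma DnE {R : realType} (theta l : R) h n y :
  Dn theta l h n y = (`|y - theta| <= Dn_radius l h n).
Proof. exact: itvcc_centerE. Qed.

Lemma has_inf_Dn_radius_tail {R : realType} (l : R) h N :
  has_inf [set r | exists k, r = Dn_radius l h (N + k)].
Proof.
split; first by exists (Dn_radius l h (N + 0)), 0%N.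
by exists (- (pi / 2)) => _ [k ->]; apply/ltW/atan_gtNpi2.
Qed.

Lemma Dunder_ge_inf_tail {R : realType} (theta l : R) h N y :
  `|y - theta| <= inf [set r | exists k, r = Dn_radius l h (N + k)] ->
  Dunder theta l h y.
Proof.
move=> yinf; exists N.+1 => //= n /= Nn; rewrite DnE (le_trans yinf) //.
apply: ge_inf; first exact: (has_inf_Dn_radius_tail l h N).2.
by exists (n - N)%N; rewrite subnKC // ltnW.
Qed.

Lemma Dn_inf_frequently_ge {R : realType} (theta l : R) h f b :
  lsc_on `[theta - pi / 2, theta + pi / 2] f ->
  (b%:E < ereal_inf (f @` closure (Dunder theta l h)))%E ->
  forall N, exists2 n, (N <= n)%N & (b%:E <= ereal_inf (f @` Dn theta l h n))%E.
Proof.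
move=> flsc bc N.
set m := inf [set r | exists k, r = Dn_radius l h (N + k)].
have bf_m y : `[theta - pi / 2, theta + pi / 2]%classic y ->
    `|y - theta| <= m -> (b%:E < f y)%E.
  move=> _ /Dunder_ge_inf_tail yD; apply: (lt_le_trans bc).
  by apply: ereal_inf_lbound; exists y => //; apply: subset_closure.
have [s ms bf_s] := lsc_on_gt_widen _ _ _ _ _ flsc bf_m.
have [k ks _] := lt_inf_imfset (has_inf_Dn_radius_tail l h N) ms.
exists (N + k)%N; first exact: leq_addr.
apply/ereal_infP => _ [y + <-]; rewrite DnE => yk; apply/ltW/bf_s.
  by rewrite itvcc_centerE (le_trans yk) // ltW // atan_ltpi2.
by rewrite (le_trans yk) // ltW.
Qed.

Theorem lemma4 (R : realType) (theta l : R) (h : nat -> R) (f : R -> \bar R) :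
  0 <= theta < pi ->
  0 < l ->
  (forall n, 0 < h n) ->
  (forall x, `[theta - pi / 2, theta + pi / 2]%classic x -> (0 <= f x)%E) ->
  lsc_on `[theta - pi / 2, theta + pi / 2]%classic f ->
  (limn_esup (fun n => ereal_inf (f @` Dn theta l h n))
     >= ereal_inf (f @` closure (Dunder theta l h)))%E.
Proof.
move=> _ _ _ _ flsc; apply: limn_esup_ge => b bc.
exact: Dn_inf_frequently_ge flsc bc.
Qed.
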